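(* Let $G=(V(G),E(G))$ be a graph, let $x\in V(G)$, and let $w = UxZx$ be a word-representant of $G$, where $U$ and $Z$ are words, $Z$ contains no occurrence of $x$, and $Z$ contains every letter of $V(G)\setminus\{x\}$. Then the word $w' = UxZ$ also represents $G$.
   Context: All graphs are simple and undirected. For a word $w$ and distinct letters $x,y$, we say $x$ and $y$ alternate in $w$ if deleting all letters other than $x$ and $y$ from $w$ yields either $xyxy\ldots$ or $yxyx\ldots$ (of odd or even length); in particular, if each of $x,y$ occurs once, they alternate. A word $w$ over the alphabet $V(G)$ represents $G$ (is a word-representant of $G$) if every letter of $V(G)$ occurs in $w$ and, for all distinct $x,y\in V(G)$, $xy\in E(G)$ if and only if $x$ and $y$ alternate in $w$. *)

From mathcomp Require Import all_boot.
Set Implicit Arguments. Unset Strict Implicit. Unset Printing Implicit Defensive.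

Definition simple_graph (T : finType) (e : rel T) : Prop :=
  symmetric e /\ irreflexive e.

Definition restrict2 (T : eqType) (w : seq T) (x y : T) : seq T :=
  [seq z <- w | (z == x) || (z == y)].

Definition alt_word (T : Type) (a b : T) (n : nat) : seq T :=
  [seq (if odd i then b else a) | i <- iota 0 n].

Definition alternate (T : eqType) (w : seq T) (x y : T) : bool :=
  let s := restrict2 w x y in
  (s == alt_word x y (size s)) || (s == alt_word y x (size s)).

Definition represents (T : finType) (e : rel T) (w : seq T) : Prop :=
  (forall v : T, v \in w) /\
  (forall x y : T, x != y -> e x y = alternate w x y).

(* Appending x to a word changes only its restrictions to pairs {x, y}, each
   of which gets a final x.  Every y != x occurs in the x-free
   suffix Z, so each such restriction already ends with y; an alternating
   word ending with y stays alternating when x is appended, and a word that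
   is not alternating stays non-alternating. *)

From mathcomp Require Import all_boot.

Section Alternation.

Variable T : eqType.
Implicit Types (w r W Z : seq T) (a b x y : T).

Lemma alt_word_rcons (a b : T) n :
  alt_word a b n.+1 = rcons (alt_word a b n) (if odd n then b else a).
Proof. by rewrite /alt_word -addn1 iotaD map_cat cats1. Qed.

Lemma alternateC w a b : alternate w a b = alternate w b a.
Proof.
rewrite /alternate /restrict2 orbC.
by under eq_filter => z do rewrite orbC.
Qed.

Lemma alternate_rcons_other w z a b :
  z != a -> z != b -> alternate (rcons w z) a b = alternate w a b.
Proof.
by move=> /negbTE za /negbTE zb; rewrite /alternate /restrict2 filter_rcons za zb.
Qed.

(* The letter following [y] in an alternating word over {a, b} = {x, y} is [x]. *)
Lemma eq_alt_word_rcons2 r a b x y :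
  x != y -> ((a == x) && (b == y)) || ((a == y) && (b == x)) ->
  (rcons (rcons r y) x == alt_word a b (size r).+2)
  = (rcons r y == alt_word a b (size r).+1).
Proof.
move=> xy ab; rewrite !alt_word_rcons !eqseq_rcons /=.
case: (r == _) => //=.
have yx : (y == x) = false by rewrite eq_sym (negbTE xy).
by case: (odd (size r)); case/orP: ab => /andP[/eqP-> /eqP->];
  rewrite ?eqxx ?(negbTE xy) ?yx.
Qed.

Lemma alternate_rcons_after {w r x y} :
  x != y -> restrict2 w x y = rcons r y ->
  alternate (rcons w x) x y = alternate w x y.
Proof.
move=> xy wr; rewrite /alternate.
have -> : restrict2 (rcons w x) x y = rcons (rcons r y) x.
  by rewrite /restrict2 filter_rcons eqxx -/(restrict2 w x y) wr.
rewrite wr !size_rcons eq_alt_word_rcons2 ?eqxx //.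
by rewrite eq_alt_word_rcons2 ?eqxx ?orbT.
Qed.

Lemma restrict2_suffix_last W {Z x y} :
  x \notin Z -> y \in Z -> exists r, restrict2 (W ++ Z) x y = rcons r y.
Proof.
move=> xZ yZ; rewrite /restrict2 filter_cat.
have yZxy : y \in [seq z <- Z | (z == x) || (z == y)].
  by rewrite mem_filter eqxx orbT yZ.
case/lastP E: [seq z <- Z | (z == x) || (z == y)] => [|s z];
  first by rewrite E in yZxy.
have : z \in [seq z <- Z | (z == x) || (z == y)] by rewrite E mem_rcons mem_head.
rewrite mem_filter => /andP[/orP[/eqP zx | /eqP ->] zZ].
  by move: xZ; rewrite -zx zZ.
by exists ([seq z <- W | (z == x) || (z == y)] ++ s); rewrite rcons_cat.
Qed.

Lemma alternate_rcons_full_suffix W Z x a b :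
  x \notin Z -> (forall v, v != x -> v \in Z) -> a != b ->
  alternate (rcons (W ++ Z) x) a b = alternate (W ++ Z) a b.
Proof.
move=> xZ Zfull ab.
wlog ax : a b ab / a = x.
  move=> wlog_ax; case: (eqVneq a x) => [|ax]; first exact: wlog_ax.
  case: (eqVneq b x) => [bx|bx].
    by rewrite alternateC [RHS]alternateC wlog_ax // eq_sym.
  by rewrite alternate_rcons_other // eq_sym.
have bx : b != x by rewrite -ax eq_sym.
have [r Er] := restrict2_suffix_last W xZ (Zfull b bx).
by rewrite ax (alternate_rcons_after _ Er) // -ax.
Qed.

End Alternation.

Theorem mainTheorem2 (T : finType) (e : rel T) (x : T) (U Z : seq T) :
  simple_graph e ->
  represents e (U ++ x :: Z ++ [:: x]) ->
  x \notin Z ->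
  (forall v : T, v != x -> v \in Z) ->
  represents e (U ++ x :: Z).
Proof.
move=> _ [_ e_alt] xZ Zfull.
have -> : U ++ x :: Z = (U ++ [:: x]) ++ Z by rewrite -catA.
have w_rcons : U ++ x :: Z ++ [:: x] = rcons ((U ++ [:: x]) ++ Z) x.
  by rewrite -cats1 -!catA.
split=> [v | a b ab].
  have [-> | /Zfull vZ] := eqVneq v x; rewrite mem_cat.
    by rewrite mem_cat mem_head orbT.
  by rewrite vZ orbT.
by rewrite e_alt // w_rcons alternate_rcons_full_suffix.
Qed.
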